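(* Let $k\ge 1$ and let $K$ be a subgroup of the cyclic group $\mathbb{Z}_{2^k}$. Then $\Gamma_{\mathbb{Z}_{2^k},K}$ admits a perfect code if and only if $|K|\in\{1,2,2^k\}$.
   Context: For a subgroup $H$ of a finite abelian group $A$ (written additively with identity $0$), the subgroup sum graph $\Gamma_{A,H}$ is the simple undirected graph with vertex set $A$ in which distinct vertices $x,y$ are adjacent if and only if $x+y\in H\setminus\{0\}$. A perfect code in a graph is a set $C$ of vertices that is independent and such that every vertex not in $C$ is adjacent to exactly one vertex of $C$. *)

From mathcomp Require Import all_boot all_algebra all_fingroup.
Set Implicit Arguments. Unset Strict Implicit. Unset Printing Implicit Defensive.
Import GRing.Theory.
Local Open Scope ring_scope.

Definition subgroup_sum_adj (A : finZmodType) (H : {set A}) : rel A :=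
  fun x y => [&& x != y, x + y \in H & x + y != 0].

Definition perfect_code (V : finType) (e : rel V) (C : {set V}) : Prop :=
  (forall x y, x \in C -> y \in C -> ~~ e x y) /\
  (forall x, x \notin C -> #|[set y in C | e x y]| = 1%N).

Definition has_perfect_code (V : finType) (e : rel V) : Prop :=
  exists C : {set V}, perfect_code e C.

From mathcomp Require Import all_boot all_algebra all_fingroup all_solvable zify.
Set Implicit Arguments. Unset Strict Implicit. Unset Printing Implicit Defensive.
Import GRing.Theory.
Local Open Scope ring_scope.

(* The subgroup K of order 2^j of Z_(2^k), with 2 <= j < k, consists of the
   multiples of m = 2^(k-j).  Its coset m/2 + K is a class of order 2 in the
   quotient whose elements have order 2^(j+1) > 2, so no edge leaves it and
   inside it x is adjacent to every vertex except x and -x.  This cocktail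
   party graph on |K| >= 4 vertices has no perfect code: a codeword x forces
   -x to be covered by a codeword that is also adjacent to x.  Conversely, for
   |K| = 1 the graph has no edges and for K = Z_(2^k) the vertex 0 is adjacent
   to all others. *)

Section PerfectCode.
Variables (V : finType) (e : rel V) (C : {set V}).
Hypothesis pcC : perfect_code e C.

Lemma perfect_code_neighbor x : x \notin C -> exists2 w, w \in C & e x w.
Proof.
move=> xC; have /eqP/cards1P [w Cx] := pcC.2 x xC.
by have := set11 w; rewrite -Cx inE => /andP[]; exists w.
Qed.

Lemma perfect_code_neighbor_uniq x w1 w2 : x \notin C ->
  w1 \in C -> w2 \in C -> e x w1 -> e x w2 -> w1 = w2.
Proof.
move=> xC w1C w2C xw1 xw2; have /eqP/cards1P [w Cx] := pcC.2 x xC.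
have : w1 \in [set y in C | e x y] by rewrite inE w1C.
have : w2 \in [set y in C | e x y] by rewrite inE w2C.
by rewrite Cx !inE => /eqP -> /eqP ->.
Qed.

End PerfectCode.

Section SubgroupSumGraph.
Variables (A : finZmodType) (K : {group A}).
Local Notation adj := (subgroup_sum_adj K).

Lemma zmod_group0 : (0 : A) \in K.
Proof. by rewrite -FinRing.zmod1gE group1. Qed.

Lemma zmod_groupD x y : x \in K -> y \in K -> x + y \in K.
Proof. by move=> Kx Ky; rewrite -FinRing.zmodMgE groupM. Qed.

Lemma zmod_groupN x : (- x \in K) = (x \in K).
Proof. by rewrite -FinRing.zmodVgE groupV. Qed.

Lemma zmod_groupB x y : x \in K -> y \in K -> x - y \in K.
Proof. by move=> Kx Ky; rewrite zmod_groupD ?zmod_groupN. Qed.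

Lemma perfect_code_trivial : #|K| = 1%N -> has_perfect_code adj.
Proof.
move=> /eqP/cards1P [w Kw].
have w0 : w = 0 by have := zmod_group0; rewrite Kw inE eq_sym => /eqP.
exists setT; split=> [x y _ _|x]; last by rewrite inE.
by rewrite /subgroup_sum_adj Kw w0 inE andbN andbF.
Qed.

Lemma perfect_code_full : K :=: setT -> has_perfect_code adj.
Proof.
move=> KT; exists [set 0]; split=> [x y|x].
  by rewrite !inE => /eqP -> /eqP ->; rewrite /subgroup_sum_adj eqxx.
rewrite inE => x0; suff -> : [set y in [set 0] | adj x y] = [set 0].
  by rewrite cards1.
apply/setP => y; rewrite !inE /subgroup_sum_adj KT inE.
by case: eqVneq => [->|] //=; rewrite addr0 x0.
Qed.

(* For [K = {0, g}] the graph is the matching [x -- g - x] (with the vertices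
   satisfying [2x = g] isolated); a perfect code picks one end of each edge,
   here the one of smaller rank in [enum A]. *)
Lemma perfect_code_order2 : #|K| = 2%N -> has_perfect_code adj.
Proof.
move=> K2; have [g g0 Kg] : exists2 g, g != 0 & K :=: [set 0; g].
  have /eqP/cards2P [a [b [ab Kab]]] := K2.
  have := zmod_group0; rewrite Kab !inE => /orP[]/eqP a0; subst.
    by exists b; rewrite // eq_sym.
  by exists a; rewrite // setUC.
have adjE x y : adj x y = (x != y) && (x + y == g).
  rewrite /subgroup_sum_adj Kg !inE; case: (eqVneq (x + y) 0) => [->|_].
    by rewrite /= andbF [0 == g]eq_sym (negbTE g0) andbF.
  by rewrite /= andbT.
pose C := [set x | (enum_rank x <= enum_rank (g - x)%R)%N].
exists C; split=> [x y|x].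
  rewrite !inE adjE => Cx Cy; apply/negP => /andP[/eqP xy /eqP sxy].
  apply/xy/enum_rank_inj/val_inj/anti_leq.
  by move: Cx Cy; rewrite -sxy addrK [x + y]addrC addrK => -> ->.
rewrite inE -ltnNge => Cx; suff -> : [set y in C | adj x y] = [set g - x].
  by rewrite cards1.
apply/setP => y; rewrite !inE adjE; apply/idP/eqP => [/and3P[_ _ /eqP <-]|->].
  by rewrite [x + y]addrC addrK.
rewrite subKr [x + _]addrC subrK eqxx (ltnW Cx) andbT /=.
by apply: contraTneq Cx => <-; rewrite ltnn.
Qed.

Section CosetOfOrderTwo.
Variable x0 : A.
Hypothesis K_x0D : x0 + x0 \in K.
Hypothesis coset_double_neq0 : forall x, x - x0 \in K -> x + x != 0.
Hypothesis K_gt2 : (2 < #|K|)%N.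

Lemma coset_addr x y : x - x0 \in K -> y - x0 \in K -> x + y \in K.
Proof.
move=> Kx Ky; have -> : x + y = (x - x0) + (y - x0) + (x0 + x0).
  by rewrite addrACA !subrK.
by apply: zmod_groupD => //; apply: zmod_groupD.
Qed.

Lemma coset_of_addr x y : x - x0 \in K -> x + y \in K -> y - x0 \in K.
Proof.
move=> Kx Kxy; rewrite -(addrKA x) [y + x]addrC zmod_groupB //.
by rewrite -(subrK x0 x) -addrA zmod_groupD.
Qed.

Lemma coset_adjE x y : x - x0 \in K -> y - x0 \in K ->
  adj x y = (x != y) && (x + y != 0).
Proof. by move=> Kx Ky; rewrite /subgroup_sum_adj coset_addr. Qed.

Lemma coset_oppr x : x - x0 \in K -> - x - x0 \in K.
Proof. by move=> Kx; apply: (coset_of_addr Kx); rewrite subrr zmod_group0. Qed.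

Lemma coset_avoid2 x : exists z, [/\ z - x0 \in K, z != x & z != - x].
Proof.
pose c := [set z | z - x0 \in K].
have c_gt2 : (#|[set x; - x]| < #|c|)%N.
  rewrite (card_preimset K (addIr (- x0))) cards2.
  by apply: leq_ltn_trans K_gt2; case: (_ != _).
have /subsetPn [z cz] : ~~ (c \subset [set x; - x]).
  by apply: contraTN c_gt2 => /subset_leq_card; rewrite leqNgt.
by rewrite !inE negb_or in cz *; case/andP; exists z.
Qed.

Lemma coset_no_perfect_code : ~ has_perfect_code adj.
Proof.
case=> C pcC; have [indepC _] := pcC.
have neighbor_in_coset x y : x - x0 \in K -> adj x y -> y - x0 \in K.
  by move=> Kx /and3P[_ Kxy _]; apply: coset_of_addr Kxy.
have [x Kx xC] : exists2 x, x - x0 \in K & x \in C.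
  have [x0C | x0C] := boolP (x0 \in C).
    by exists x0; rewrite // subrr zmod_group0.
  have [w wC x0w] := perfect_code_neighbor pcC x0C.
  by exists w; rewrite // (neighbor_in_coset x0) ?subrr ?zmod_group0.
have Knx := coset_oppr Kx.
have [z [Kz zx znx]] := coset_avoid2 x.
have zC : z \notin C.
  apply/negP => zC; move/negP: (indepC _ _ xC zC); apply.
  by rewrite coset_adjE // eq_sym zx addrC addr_eq0.
have nxC : - x \notin C.
  apply/negP => nxC; move/negP: (coset_double_neq0 Kx); apply.
  have := perfect_code_neighbor_uniq pcC zC xC nxC.
  rewrite !coset_adjE // subr_eq0 addr_eq0 zx znx => /(_ isT isT) xE.
  by rewrite {2}xE subrr.
have [w wC nxw] := perfect_code_neighbor pcC nxC.
have Kw := neighbor_in_coset _ _ Knx nxw.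
move: nxw (indepC _ _ xC wC); rewrite !coset_adjE // => /andP[nxw].
rewrite addrC subr_eq0 eq_sym => xw; apply/negP/negPn/andP; split => //.
by rewrite addrC addr_eq0 eq_sym.
Qed.

End CosetOfOrderTwo.

End SubgroupSumGraph.

Section CyclicSubgroups.
Variables (n : nat) (K : {group 'Z_n}).
Hypothesis n_gt1 : (1 < n)%N.
Local Notation m := (n %/ #|K|)%N.

Lemma card_Zp_group_dvdn : (#|K| %| n)%N.
Proof. by have := cardSg (subsetT K); rewrite cardsT card_ord Zp_cast. Qed.

Lemma index_Zp_group_dvdn : (m %| n)%N.
Proof.
by apply/dvdnP; exists #|K|; rewrite mulnC divnK ?card_Zp_group_dvdn.
Qed.

(* [K] is the unique subgroup of its order of the cyclic group [<[1]>],
   namely [<[m%:R]>]. *)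
Lemma mem_Zp_group x : (x \in K) = (m %| x)%N.
Proof.
have Km : ((Zp_trunc n).+2 %/ #|K|)%N = m by rewrite (Zp_cast n_gt1).
have : K \in [set H : {group 'Z_n} | H \subset <[Zp1]>%g & #|H| == #|K|].
  by rewrite inE -Zp_cycle subsetT eqxx.
rewrite cycle_sub_group order_Zp1; last by rewrite Zp_cast ?card_Zp_group_dvdn.
rewrite Km inE => /eqP/(congr1 (fun H : {group _} => x \in H)) ->.
apply/cycleP/idP => [[i ->] | /dvdnP[i xE]].
  have mN : (m %| (Zp_trunc n).+2)%N.
    have := index_Zp_group_dvdn.
    by rewrite -[X in (_ %| X)%N -> _](Zp_cast n_gt1).
  rewrite !Zp_expg /= modnMml /dvdn modn_dvdm // -/(dvdn _ _).
  by rewrite dvdn_mulr // dvdn_mull.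
by exists i; rewrite -expgM -{1}[x]Zp1_expgz xE mulnC.
Qed.

Lemma mem_Zp_group_nat i : ((i%:R : 'Z_n) \in K) = (m %| i)%N.
Proof.
by rewrite mem_Zp_group val_Zp_nat // /dvdn modn_dvdm ?index_Zp_group_dvdn.
Qed.

Lemma Zp_group_no_perfect_code : (2 %| #|K|)%N -> (2 %| m)%N -> (2 < #|K|)%N ->
  ~ has_perfect_code (subgroup_sum_adj K).
Proof.
move=> K_even m_even K_gt2; pose h := (m %/ 2)%N.
have m_pos : (0 < m)%N.
  by rewrite divn_gt0 ?cardG_gt0 // dvdn_leq ?card_Zp_group_dvdn; lia.
have mE : m = (h * 2)%N by rewrite divnK.
apply: (@coset_no_perfect_code _ _ h%:R) K_gt2.
  by rewrite -natrD mem_Zp_group_nat addnn -mul2n mulnC -mE.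
move=> x; rewrite mem_Zp_group => /dvdnP[t xE].
have -> : x + x = (m * t.*2.+1)%:R.
  rewrite -(subrK (h%:R) x) -[x - _]natr_Zp xE -!natrD; congr _%:R; lia.
apply/negP => /eqP/(congr1 (@nat_of_ord _)); rewrite val_Zp_nat // => /eqP.
rewrite -/(dvdn _ _) -[X in (X %| _)%N](divnK card_Zp_group_dvdn).
by rewrite dvdn_pmul2l // => /(dvdn_trans K_even); rewrite dvdn2 /= odd_double.
Qed.

End CyclicSubgroups.

Unset Implicit Arguments.

Theorem corollary3p10 (k : nat) (hk : (1 <= k)%N) (K : {group 'Z_(2 ^ k)}) :
  has_perfect_code (subgroup_sum_adj K) <-> (#|K| \in [:: 1; 2; 2 ^ k])%N.
Proof.
have n_gt1 : (1 < 2 ^ k)%N by rewrite -{1}(expn0 2) ltn_exp2l.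
have /(dvdn_pfactor _ _ (isT : prime 2))[j jk Kj] := card_Zp_group_dvdn K n_gt1.
split=> [pcK | ].
  have exp2_inj := @eqn_exp2l 2 _ _ isT.
  rewrite Kj !inE (exp2_inj j 0) (exp2_inj j 1) exp2_inj.
  apply/negPn/negP; rewrite !negb_or => /and3P[j0 j1 jk'].
  apply: (Zp_group_no_perfect_code n_gt1) pcK; rewrite Kj -?expnB //.
  - by rewrite dvdn_exp; lia.
  - by rewrite dvdn_exp; lia.
  - by rewrite -[2%N](expn1 2) ltn_exp2l; lia.
rewrite !inE => /or3P[] /eqP K_E.
- exact: perfect_code_trivial.
- exact: perfect_code_order2.
- apply: perfect_code_full; apply/eqP; rewrite eqEcard subsetT cardsT card_ord.
  by rewrite K_E Zp_cast ?leqnn.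
Qed.
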